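(* Let $\mathrm{R}$ be a real closed field, let $g_i,h_j \in \mathrm{R}[X_1,\ldots, X_n]_{\le d}$ for $i=1,\ldots,r$, $j=1,\ldots,s$, and let \[ M=\{x \in \mathrm{R}^n \mid g_i(x) \le 0,\ h_j(x) = 0,\ i=1,\ldots,r,\ j=1,\ldots,s,\ x_k \in \{0,1\},\ k=1,\ldots,n\}. \] Let $E$ be a closed and bounded $\mathcal{P}$-semi-algebraic subset of $\mathrm{R}^{n}$ with $\mathcal{P} \subset \mathrm{R}[X_1,\ldots,X_{n}]_{\leq d}$ finite. Then there exist $\kappa >0$ and $\rho = (O(d))^{2n+14}$ (i.e. $\rho\le (Cd)^{2n+14}$ for an absolute constant $C$) such that \[ \mathrm{dist}(x,M)^{\rho} \le \kappa \cdot \psi (x) \quad \text{for all } x \in E, \] where \[ \psi(x) = \sqrt{\sum_{j=1}^{s} (h_j(x))^2} + \sqrt{\sum_{i=1}^{r} (\max\{g_i(x),0\})^2} +\sum_{k=1}^n |x_k(1-x_k)|. \]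
   Context: $\mathrm{dist}(x,M)=\inf_{y\in M}\|x-y\|$ with the Euclidean norm. For a finite set of polynomials $\mathcal{P}$, a $\mathcal{P}$-semi-algebraic set is the set of points satisfying a quantifier-free formula whose atoms are of the form $P=0$, $P>0$, $P<0$ with $P \in \mathcal{P}$. *)

From HB Require Import structures.
From mathcomp Require Import all_boot all_order all_algebra.
From mathcomp Require Import mpoly.
Set Implicit Arguments. Unset Strict Implicit. Unset Printing Implicit Defensive.
Import Order.TTheory GRing.Theory Num.Theory.
Local Open Scope ring_scope.

Section SemiAlg.
Variables (R : rcfType) (n : nat).

Definition point := 'I_n -> R.

Definition enorm (v : point) : R := Num.sqrt (\sum_(i < n) v i ^+ 2).
Definition edist (x y : point) : R := enorm (fun i => x i - y i).

Definition is_dist (x : point) (M : point -> Prop) (delta : R) : Prop :=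
  (forall y, M y -> delta <= edist x y) /\
  (forall d', (forall y, M y -> d' <= edist x y) -> d' <= delta).

Inductive qf_formula : Type :=
  | FEq0 of {mpoly R[n]}
  | FGt0 of {mpoly R[n]}
  | FLt0 of {mpoly R[n]}
  | FTrue
  | FFalse
  | FNot of qf_formula
  | FAnd of qf_formula & qf_formula
  | FOr of qf_formula & qf_formula.

Fixpoint qf_holds (x : point) (f : qf_formula) : Prop :=
  match f with
  | FEq0 p => p.@[x] = 0
  | FGt0 p => 0 < p.@[x]
  | FLt0 p => p.@[x] < 0
  | FTrue => True
  | FFalse => False
  | FNot f1 => ~ qf_holds x f1
  | FAnd f1 f2 => qf_holds x f1 /\ qf_holds x f2
  | FOr f1 f2 => qf_holds x f1 \/ qf_holds x f2
  end.

Fixpoint atoms_in (P : seq {mpoly R[n]}) (f : qf_formula) : Prop :=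
  match f with
  | FEq0 p | FGt0 p | FLt0 p => p \in P
  | FTrue | FFalse => True
  | FNot f1 => atoms_in P f1
  | FAnd f1 f2 | FOr f1 f2 => atoms_in P f1 /\ atoms_in P f2
  end.

Definition semialgebraic (P : seq {mpoly R[n]}) (S : point -> Prop) : Prop :=
  exists f, atoms_in P f /\ forall x, S x <-> qf_holds x f.

Definition closed_set (S : point -> Prop) : Prop :=
  forall x, ~ S x -> exists2 e : R, 0 < e & forall y, edist x y < e -> ~ S y.

Definition bounded_set (S : point -> Prop) : Prop :=
  exists B : R, forall x, S x -> enorm x <= B.

Variables (r s : nat) (g : 'I_r -> {mpoly R[n]}) (h : 'I_s -> {mpoly R[n]}).

Definition Mset (x : point) : Prop :=
  (forall i, (g i).@[x] <= 0) /\ (forall j, (h j).@[x] = 0) /\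
  (forall k, x k = 0 \/ x k = 1).

Definition psi (x : point) : R :=
  Num.sqrt (\sum_(j < s) ((h j).@[x]) ^+ 2)
  + Num.sqrt (\sum_(i < r) (Num.max ((g i).@[x]) 0) ^+ 2)
  + \sum_(k < n) `|x k * (1 - x k)|.

End SemiAlg.

From HB Require Import structures.
From mathcomp Require Import all_boot all_order all_algebra.
From mathcomp Require Import mpoly.
From mathcomp Require Import ring lra.
From Stdlib Require Import FunctionalExtensionality.
Import Order.TTheory GRing.Theory Num.Theory.
Local Open Scope ring_scope.
Set Implicit Arguments.

(* Since M lies in the finite set {0,1}^n, the inequality already holds with
   exponent 1, and only the boundedness of E matters.  Let [x] range over a
   box.  Near a binary point outside M some g_i is positive or some h_j is
   nonzero, and by Lipschitz continuity of polynomials on the box this stays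
   true on a uniform neighbourhood, where psi is bounded below; away from all
   binary points the term sum_k |x_k (1 - x_k)| of psi is bounded below; and
   near a binary point of M the distance to it is at most twice that term. *)

Lemma sum_sqr_le_sqr_sum_norm {R : realDomainType} (I : Type) (s : seq I) (F : I -> R) :
  \sum_(i <- s) F i ^+ 2 <= (\sum_(i <- s) `|F i|) ^+ 2.
Proof.
elim: s => [|a s IH]; first by rewrite !big_nil expr0n.
rewrite !big_cons -real_normK ?num_real //.
have : 0 <= \sum_(i <- s) `|F i| by apply: sumr_ge0 => i _; exact: normr_ge0.
have := normr_ge0 (F a); move: IH.
set S := \sum_(i <- s) `|F i|; set T := \sum_(i <- s) F i ^+ 2; nra.
Qed.

Lemma sqrt_sum_sqr_le_sum_norm {R : rcfType} (I : Type) (s : seq I) (F : I -> R) :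
  Num.sqrt (\sum_(i <- s) F i ^+ 2) <= \sum_(i <- s) `|F i|.
Proof.
have S_ge0 : 0 <= \sum_(i <- s) `|F i| by apply: sumr_ge0 => i _; exact: normr_ge0.
rewrite -[leRHS](ger0_norm S_ge0) -sqrtr_sqr ler_sqrt ?sqr_ge0 //.
exact: sum_sqr_le_sqr_sum_norm.
Qed.

Lemma norm_le_sqrt_sum_sqr {R : rcfType} (m : nat) (F : 'I_m -> R) k :
  `|F k| <= Num.sqrt (\sum_(i < m) F i ^+ 2).
Proof.
rewrite -sqrtr_sqr ler_sqrt; last by apply: sumr_ge0 => i _; exact: sqr_ge0.
by rewrite (bigD1 k) //= lerDl; apply: sumr_ge0 => i _; exact: sqr_ge0.
Qed.

Definition round01 {R : realFieldType} (x : R) : R := if 1 / 2 < x then 1 else 0.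

Lemma dist_round01_le {R : realFieldType} (x : R) :
  `|x - round01 x| <= 2 * `|x * (1 - x)|.
Proof.
rewrite /round01 normrM; case: ifP => hx.
  have := ler_norm x; have := normr_ge0 (1 - x); rewrite distrC; nra.
have := ler_norm (1 - x); have := normr_ge0 x; move/negbT: hx; rewrite -leNgt.
rewrite subr0; nra.
Qed.

Lemma finite_uniform_pos {R : realDomainType} (I : finType) (Q : I -> R -> Prop) :
  (forall i, exists2 e, 0 < e & Q i e) ->
  (forall i e e', 0 < e' -> e' <= e -> Q i e -> Q i e') ->
  exists2 e, 0 < e & forall i, Q i e.
Proof.
move=> Qpos Qmono.
suff [e e_gt0 Qe] : exists2 e, 0 < e & forall i, i \in enum I -> Q i e.
  by exists e => // i; apply: Qe; rewrite mem_enum.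
elim: (enum I) => [|a s [es es_gt0 Qs]]; first by exists 1.
have [ea ea_gt0 Qa] := Qpos a.
have min_gt0 : 0 < Num.min ea es by rewrite lt_min ea_gt0.
exists (Num.min ea es) => // i; rewrite in_cons => /orP[/eqP -> | i_s].
  by apply: (Qmono a ea) => //; rewrite ge_min lexx.
by apply: (Qmono i es) => //; [rewrite ge_min lexx orbT | exact: Qs].
Qed.

Section BoxLipschitz.
Context {R : rcfType} {n : nat} (B : R).

Definition inbox (x : point R n) := forall k, `|x k| <= B.

Definition l1dist (x y : point R n) : R := \sum_k `|x k - y k|.

Lemma edist_le_l1dist x y : edist x y <= l1dist x y.
Proof. exact: sqrt_sum_sqr_le_sum_norm. Qed.

Lemma l1dist_le_box x y : inbox x -> inbox y -> l1dist x y <= n%:R * (B + B).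
Proof.
move=> bx by_; rewrite -[n in n%:R]card_ord mulr_natl -sumr_const.
by apply: ler_sum => k _; apply: le_trans (ler_normB _ _) (lerD (bx k) (by_ k)).
Qed.

Definition bounded_lipschitz (f : point R n -> R) := exists K L : R,
  (forall x, inbox x -> `|f x| <= K) /\
  (forall x y, inbox x -> inbox y -> `|f x - f y| <= L * l1dist x y).

Lemma bounded_lipschitz_ext f f' :
  bounded_lipschitz f -> f =1 f' -> bounded_lipschitz f'.
Proof.
move=> [K [L [fK fL]]] ff'; exists K, L.
by split=> [x|x y]; rewrite -!ff'; [exact: fK | exact: fL].
Qed.

Lemma bounded_lipschitz_const c : bounded_lipschitz (fun=> c).
Proof. by exists `|c|, 0; split=> // x y _ _; rewrite subrr normr0 mul0r. Qed.

Lemma bounded_lipschitz_coord k : bounded_lipschitz (fun x => x k).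
Proof.
exists B, 1; split=> // x y _ _; rewrite mul1r /l1dist (bigD1 k) //= lerDl.
by apply: sumr_ge0 => i _; exact: normr_ge0.
Qed.

Lemma bounded_lipschitz_norm f :
  bounded_lipschitz f -> bounded_lipschitz (fun x => `|f x|).
Proof.
move=> [K [L [fK fL]]]; exists K, L; split=> [x bx|x y bx by_].
  by rewrite normr_id; exact: fK.
exact: le_trans (ler_dist_dist _ _) (fL _ _ bx by_).
Qed.

Lemma bounded_lipschitz_add f f' : bounded_lipschitz f -> bounded_lipschitz f' ->
  bounded_lipschitz (fun x => f x + f' x).
Proof.
move=> [K [L [fK fL]]] [K' [L' [fK' fL']]]; exists (K + K'), (L + L').
split=> [x bx|x y bx by_].
  exact: le_trans (ler_normD _ _) (lerD (fK _ bx) (fK' _ bx)).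
rewrite opprD addrACA mulrDl; apply: le_trans (ler_normD _ _) _.
exact: lerD (fL _ _ bx by_) (fL' _ _ bx by_).
Qed.

Lemma bounded_lipschitz_mul f f' : bounded_lipschitz f -> bounded_lipschitz f' ->
  bounded_lipschitz (fun x => f x * f' x).
Proof.
move=> [K [L [fK fL]]] [K' [L' [fK' fL']]]; exists (K * K'), (K * L' + L * K').
split=> [x bx|x y bx by_].
  by rewrite normrM; apply: ler_pM => //; [exact: fK | exact: fK'].
have -> : f x * f' x - f y * f' y = f x * (f' x - f' y) + (f x - f y) * f' y.
  by ring.
have -> : (K * L' + L * K') * l1dist x y = K * (L' * l1dist x y) + (L * l1dist x y) * K'.
  by ring.
apply: le_trans (ler_normD _ _) _; rewrite !normrM.
by apply: lerD; apply: ler_pM; rewrite ?normr_ge0 ?fK ?fK' ?fL ?fL'.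
Qed.

Lemma bounded_lipschitz_sum (I : Type) (s : seq I) (F : I -> point R n -> R) :
  (forall i, bounded_lipschitz (F i)) ->
  bounded_lipschitz (fun x => \sum_(i <- s) F i x).
Proof.
move=> FL; elim: s => [|a s IH].
  by apply: bounded_lipschitz_ext (bounded_lipschitz_const 0) _ => x; rewrite big_nil.
apply: bounded_lipschitz_ext (bounded_lipschitz_add (FL a) IH) _ => x.
by rewrite big_cons.
Qed.

Lemma bounded_lipschitz_prod (I : Type) (s : seq I) (F : I -> point R n -> R) :
  (forall i, bounded_lipschitz (F i)) ->
  bounded_lipschitz (fun x => \prod_(i <- s) F i x).
Proof.
move=> FL; elim: s => [|a s IH].
  by apply: bounded_lipschitz_ext (bounded_lipschitz_const 1) _ => x; rewrite big_nil.
apply: bounded_lipschitz_ext (bounded_lipschitz_mul (FL a) IH) _ => x.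
by rewrite big_cons.
Qed.

Lemma bounded_lipschitz_exp f k :
  bounded_lipschitz f -> bounded_lipschitz (fun x => f x ^+ k).
Proof.
move=> fL; elim: k => [|k IH].
  by apply: bounded_lipschitz_ext (bounded_lipschitz_const 1) _ => x; rewrite expr0.
by apply: bounded_lipschitz_ext (bounded_lipschitz_mul fL IH) _ => x; rewrite exprS.
Qed.

Lemma bounded_lipschitz_meval (p : {mpoly R[n]}) :
  bounded_lipschitz (fun x => p.@[x]).
Proof.
apply: bounded_lipschitz_ext (fun x => esym (mevalE x p)).
apply: bounded_lipschitz_sum => m.
apply: bounded_lipschitz_mul; first exact: bounded_lipschitz_const.
apply: bounded_lipschitz_prod => i.
exact/bounded_lipschitz_exp/bounded_lipschitz_coord.
Qed.

Lemma bounded_lipschitz_pos_near f y : bounded_lipschitz f -> inbox y -> 0 < f y ->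
  exists2 e, 0 < e & forall x, inbox x -> l1dist x y <= e -> e <= f x.
Proof.
move=> [_ [L [_ fL]]] by_ fy_gt0.
have L1_gt0 : 0 < 1 + `|L| by rewrite ltr_wpDr.
exists (f y / (1 + `|L|)); first exact: divr_gt0.
move=> x bx dxy; set e := f y / (1 + `|L|) in dxy *.
have fy_eq : f y = e + `|L| * e by rewrite /e; field; rewrite gt_eqF.
have dxy_ge0 : 0 <= l1dist x y by apply: sumr_ge0 => k _; exact: normr_ge0.
have := le_trans (ler_wpM2r dxy_ge0 (ler_norm L)) (ler_wpM2l (normr_ge0 L) dxy).
have := fL _ _ bx by_; rewrite distrC => /(le_trans (ler_norm _)); lra.
Qed.

End BoxLipschitz.

Section BinaryLojasiewicz.
Context {R : rcfType} {n r s : nat}.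
Variables (g : 'I_r -> {mpoly R[n]}) (h : 'I_s -> {mpoly R[n]}).

Definition binary_point (b : {ffun 'I_n -> bool}) : point R n := fun k => (b k)%:R.

Definition in_M (b : {ffun 'I_n -> bool}) : bool :=
  [forall i, (g i).@[binary_point b] <= 0] && [forall j, (h j).@[binary_point b] == 0].

Lemma in_MP b : reflect (Mset g h (binary_point b)) (in_M b).
Proof.
apply: (iffP andP) => [[/forallP gb /forallP hb] | [gb [hb _]]].
  split; [exact: gb | split=> [j|k]; first exact/eqP/hb].
  by rewrite /binary_point; case: (b k); [right | left].
by split; apply/forallP => // j; exact/eqP.
Qed.

Lemma Mset_binary y : Mset g h y -> exists2 b, in_M b & y = binary_point b.
Proof.
move=> My; have [_ [_ y01]] := My.
set b := [ffun k => y k == 1].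
have y_eq : y = binary_point b.
  apply: functional_extensionality => k; rewrite /binary_point ffunE.
  by case: (y01 k) => ->; rewrite ?eqxx // eq_sym oner_eq0.
by exists b => //; apply/in_MP; rewrite -y_eq.
Qed.

Lemma binary_point_inbox {B} b : 1 <= B -> inbox B (binary_point b).
Proof.
move=> B_ge1 k; rewrite /binary_point; case: (b k); rewrite ?normr1 ?normr0 //.
exact: le_trans ler01 B_ge1.
Qed.

Lemma is_dist_binary_min x :
  (exists y, Mset g h y) ->
  exists2 delta, is_dist x (Mset g h) delta &
    forall b, in_M b -> delta <= edist x (binary_point b).
Proof.
move=> [y /Mset_binary [b1 Mb1 _]].
case: (arg_minP (fun b => edist x (binary_point b)) Mb1) => b0 Mb0 b0_min.
exists (edist x (binary_point b0)) => //; split.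
  by move=> _ /Mset_binary [b Mb ->]; exact: b0_min.
by move=> d' d'_le; apply: d'_le; exact/in_MP.
Qed.

Let binary_defect (x : point R n) : R := \sum_(k < n) `|x k * (1 - x k)|.

Lemma psi_split x : psi g h x =
  Num.sqrt (\sum_(j < s) ((h j).@[x]) ^+ 2)
  + Num.sqrt (\sum_(i < r) (Num.max ((g i).@[x]) 0) ^+ 2) + binary_defect x.
Proof. by []. Qed.

Lemma binary_defect_ge0 x : 0 <= binary_defect x.
Proof. by apply: sumr_ge0 => k _; exact: normr_ge0. Qed.

Lemma binary_defect_le_psi x : binary_defect x <= psi g h x.
Proof.
rewrite psi_split; have := sqrtr_ge0 (\sum_(j < s) ((h j).@[x]) ^+ 2).
have := sqrtr_ge0 (\sum_(i < r) (Num.max ((g i).@[x]) 0) ^+ 2); lra.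
Qed.

Lemma psi_ge0 x : 0 <= psi g h x.
Proof. exact: le_trans (binary_defect_ge0 x) (binary_defect_le_psi x). Qed.

Lemma g_le_psi i x : (g i).@[x] <= psi g h x.
Proof.
have : (g i).@[x] <= `|Num.max (g i).@[x] 0|.
  by rewrite (le_trans _ (ler_norm _)) ?le_max ?lexx.
have := norm_le_sqrt_sum_sqr (fun i => Num.max (g i).@[x] 0) i.
have := sqrtr_ge0 (\sum_(j < s) ((h j).@[x]) ^+ 2); have := binary_defect_ge0 x.
rewrite psi_split; lra.
Qed.

Lemma norm_h_le_psi j x : `|(h j).@[x]| <= psi g h x.
Proof.
have := norm_le_sqrt_sum_sqr (fun j => (h j).@[x]) j.
have := sqrtr_ge0 (\sum_(i < r) (Num.max ((g i).@[x]) 0) ^+ 2).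
have := binary_defect_ge0 x; rewrite psi_split; lra.
Qed.

Lemma psi_pos_near_nonmember {B} b : 1 <= B -> ~~ in_M b ->
  exists2 e, 0 < e &
    forall x, inbox B x -> l1dist x (binary_point b) <= e -> e <= psi g h x.
Proof.
move=> B_ge1; have bb := binary_point_inbox b B_ge1.
rewrite negb_and !negb_forall => /orP[/existsP[i] | /existsP[j]].
  rewrite -ltNge => gi_pos.
  have gL := bounded_lipschitz_meval B (g i).
  have [e e_gt0 near] := bounded_lipschitz_pos_near gL bb gi_pos.
  by exists e => // x bx dx; exact: le_trans (near x bx dx) (g_le_psi i x).
rewrite -normr_gt0 => hj_pos.
have hL := bounded_lipschitz_norm (bounded_lipschitz_meval B (h j)).
have [e e_gt0 near] := bounded_lipschitz_pos_near hL bb hj_pos.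
by exists e => // x bx dx; exact: le_trans (near x bx dx) (norm_h_le_psi j x).
Qed.

Lemma psi_pos_near_nonmembers {B} : 1 <= B ->
  exists2 e, 0 < e & forall b, ~~ in_M b ->
    forall x, inbox B x -> l1dist x (binary_point b) <= e -> e <= psi g h x.
Proof.
move=> B_ge1; apply: finite_uniform_pos => [b | b e e' e'_gt0 e'_le Qe notMb x bx dx].
  case: (boolP (in_M b)) => [Mb | notMb]; first by exists 1.
  by have [e e_gt0 Qe] := psi_pos_near_nonmember b B_ge1 notMb; exists e.
exact: le_trans e'_le (Qe notMb x bx (le_trans dx e'_le)).
Qed.

Lemma l1dist_round01 x :
  l1dist x (binary_point [ffun k => 1 / 2 < x k]) <= 2 * binary_defect x.
Proof.
rewrite mulr_sumr; apply: ler_sum => k _; rewrite /binary_point ffunE.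
have -> : ((1 / 2 < x k)%R : nat)%:R = round01 (x k) by rewrite /round01; case: ifP.
exact: dist_round01_le.
Qed.

Lemma binary_lojasiewicz {B} : 1 <= B -> (exists y, Mset g h y) ->
  exists2 kappa, 0 < kappa & forall x, inbox B x ->
    exists2 b, in_M b & edist x (binary_point b) <= kappa * psi g h x.
Proof.
move=> B_ge1 [y /Mset_binary [b1 Mb1 _]].
have [e e_gt0 near] := psi_pos_near_nonmembers B_ge1.
set D := n%:R * (B + B); have D_ge0 : 0 <= D by rewrite mulr_ge0 ?ler0n //; lra.
set c := 2 * D / e; have c_ge0 : 0 <= c by rewrite divr_ge0 //; lra.
have cE : c * (e / 2) = D by rewrite /c; field; rewrite gt_eqF.
(* [2] serves points near a binary point of M, [c] points where psi >= e / 2. *)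
exists (2 + c); first lra.
move=> x bx; have psix_ge0 := psi_ge0 x; have cpsix_ge0 := mulr_ge0 c_ge0 psix_ge0.
have far (b : {ffun 'I_n -> bool}) : e / 2 <= psi g h x ->
    edist x (binary_point b) <= (2 + c) * psi g h x.
  move=> psi_big; have := ler_wpM2l c_ge0 psi_big.
  have := le_trans (edist_le_l1dist _ _) (l1dist_le_box bx (binary_point_inbox b B_ge1)).
  rewrite -/D; lra.
case: (ltP (binary_defect x) (e / 2)) => [small | big]; last first.
  by exists b1 => //; apply: far; exact: le_trans big (binary_defect_le_psi x).
set b := [ffun k => 1 / 2 < x k]; have := l1dist_round01 x; rewrite -/b => db.
case: (boolP (in_M b)) => [Mb | notMb].
  exists b => //; have := le_trans (edist_le_l1dist _ _) db.
  have := binary_defect_le_psi x; lra.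
by exists b1 => //; apply: far; have := near b notMb x bx; lra.
Qed.

End BinaryLojasiewicz.

Theorem corollary6p1 :
  exists C : nat,
  forall (R : rcfType) (n d r s : nat)
    (g : 'I_r -> {mpoly R[n]}) (h : 'I_s -> {mpoly R[n]})
    (P : seq {mpoly R[n]}) (E : point R n -> Prop),
    (0 < d)%N ->
    (forall i, (msize (g i) <= d.+1)%N) ->
    (forall j, (msize (h j) <= d.+1)%N) ->
    (forall p, p \in P -> (msize p <= d.+1)%N) ->
    semialgebraic P E -> closed_set E -> bounded_set E ->
    (exists y, Mset g h y) ->
    exists (kappa : R) (rho : nat),
      0 < kappa /\ (rho <= (C * d) ^ (2 * n + 14))%N /\
      forall x, E x ->
        exists delta : R, is_dist x (Mset g h) delta /\
          delta ^+ rho <= kappa * psi g h x.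
Proof.
exists 1%N => R n d r s g h P E d_gt0 _ _ _ _ _ [B E_bounded] M_nonempty.
have B1_ge1 : 1 <= Num.max B 1 by rewrite le_max lexx orbT.
have [kappa kappa_gt0 lojasiewicz] := binary_lojasiewicz B1_ge1 M_nonempty.
exists kappa, 1%N; split=> //; split; first by rewrite mul1n expn_gt0 d_gt0.
move=> x Ex; have [delta dist_delta delta_min] := is_dist_binary_min x M_nonempty.
exists delta; split=> //; rewrite expr1.
have bx : inbox (Num.max B 1) x.
  move=> k; apply: le_trans (norm_le_sqrt_sum_sqr x k) _.
  by apply: le_trans (E_bounded x Ex) _; rewrite le_max lexx.
have [b Mb le_psi] := lojasiewicz x bx.
exact: le_trans (delta_min b Mb) le_psi.
Qed.
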